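(* Let $\mathsf{Ax}\subseteq\{\mathsf{C}_\Diamond,\mathsf{I}_{\Diamond\Box}\}$. Then $\mathsf{CK}\oplus\mathsf{N}_{\Diamond\Box}\oplus\mathsf{Ax}$ is sound and strongly complete with respect to the class of $\mathsf{CK}$-frames satisfying ($\mathsf{N}_{\Diamond\Box}$-corr) and ($\mathsf{A}$-suff) for each $\mathsf{A}\in\mathsf{Ax}$. Moreover, if $\mathsf{I}_{\Diamond\Box}\in\mathsf{Ax}$, it is also sound and strongly complete with respect to the class of $\mathsf{CK}$-frames satisfying ($\mathsf{N}_{\Diamond\Box}$-suff) and ($\mathsf{A}$-suff) for each $\mathsf{A}\in\mathsf{Ax}$. (Sound and strongly complete w.r.t. $\mathcal{F}$ means $\Gamma\vdash\varphi$ iff $\Gamma\Vdash_{\mathcal{F}}\varphi$ for all $\Gamma\subseteq\mathbf{L}$, $\varphi\in\mathbf{L}$.)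
   Context: Formulas: $\mathbf{L}$ is generated from a countably infinite set of propositional variables by $\varphi ::= p \mid \bot \mid \varphi\wedge\varphi \mid \varphi\vee\varphi \mid \varphi\to\varphi \mid \Box\varphi \mid \Diamond\varphi$. Axioms: $\mathsf{K}_\Box$: $\Box(\varphi\to\psi)\to(\Box\varphi\to\Box\psi)$; $\mathsf{K}_\Diamond$: $\Box(\varphi\to\psi)\to(\Diamond\varphi\to\Diamond\psi)$; $\mathsf{N}_{\Diamond\Box}$: $\Diamond\bot\to\Box\bot$; $\mathsf{C}_\Diamond$: $\Diamond(\varphi\vee\psi)\to\Diamond\varphi\vee\Diamond\psi$; $\mathsf{I}_{\Diamond\Box}$: $(\Diamond\varphi\to\Box\psi)\to\Box(\varphi\to\psi)$. For a set $\mathsf{Ax}$ of axioms, $\mathsf{CK}\oplus\mathsf{Ax}$ is the relation $\Gamma\vdash_{\mathsf{Ax}}\varphi$ inductively generated by: (Ax) $\Gamma\vdash\varphi$ whenever $\varphi$ is a substitution instance of an axiom of a standard Hilbert axiomatisation of intuitionistic propositional logic, of $\mathsf{K}_\Box$, of $\mathsf{K}_\Diamond$, or of an element of $\mathsf{Ax}$; (El) $\Gamma\vdash\varphi$ if $\varphi\in\Gamma$; (MP) from $\Gamma\vdash\varphi$ and $\Gamma\vdash\varphi\to\psi$ infer $\Gamma\vdash\psi$; (Nec) from $\emptyset\vdash\varphi$ infer $\Gamma\vdash\Box\varphi$. A $\mathsf{CK}$-frame is a tuple $(X,e,\le,R)$ where $(X,\le)$ is a preorder, $e\in X$ is a maximal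 element of $(X,\le)$, and $R$ is a binary relation on $X$ with $eRx$ iff $x=e$. A valuation assigns to each variable $p$ an upset $V(p)$ with $e\in V(p)$. Forcing: $x\Vdash p$ iff $x\in V(p)$; $x\Vdash\bot$ iff $x=e$; $\wedge,\vee$ pointwise; $x\Vdash\varphi\to\psi$ iff for all $y\ge x$, $y\Vdash\varphi$ implies $y\Vdash\psi$; $x\Vdash\Box\varphi$ iff for all $y,z$ with $x\le y$ and $yRz$, $z\Vdash\varphi$; $x\Vdash\Diamond\varphi$ iff for all $y\ge x$ there is $z$ with $yRz$ and $z\Vdash\varphi$. For a class $\mathcal{F}$ of frames, $\Gamma\Vdash_{\mathcal{F}}\varphi$ means: for every frame in $\mathcal{F}$, every valuation and every world $x$, if $x$ forces all of $\Gamma$ then $x\Vdash\varphi$. Frame conditions: ($\mathsf{N}_{\Diamond\Box}$-suff) for all $x,y$, if $xRe$ and $xRy$ then $y=e$. ($\mathsf{N}_{\Diamond\Box}$-corr) for all $x$, if $yRe$ for every $y\ge x$, then for all $y,z$ with $x\le y$ and $yRz$, $z=e$. ($\mathsf{C}_\Diamond$-suff) for all $x$ there is $x'\ge x$ such that for all $y,z$, if $x\le y$ and $x'Rz$ then there is $w$ with $yRw$ and $z\le w$. ($\mathsf{I}_{\Diamond\Box}$-suff) for all $x,y,z$ with $xRy$ and $y\le z$ there is $u$ with $x\le u$ and $uRz$ such that for every $s\ge u$ there is $t$ with $sRt$ and $z\le t$. *)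

Inductive form : Type :=
| Var : nat -> form
| Bot : form
| And : form -> form -> form
| Or  : form -> form -> form
| Imp : form -> form -> form
| Box : form -> form
| Dia : form -> form.

Inductive ipc_axiom : form -> Prop :=
| A1 p q : ipc_axiom (Imp p (Imp q p))
| A2 p q r : ipc_axiom (Imp (Imp p (Imp q r)) (Imp (Imp p q) (Imp p r)))
| A3 p q : ipc_axiom (Imp (And p q) p)
| A4 p q : ipc_axiom (Imp (And p q) q)
| A5 p q : ipc_axiom (Imp p (Imp q (And p q)))
| A6 p q : ipc_axiom (Imp p (Or p q))
| A7 p q : ipc_axiom (Imp q (Or p q))
| A8 p q r : ipc_axiom (Imp (Imp p r) (Imp (Imp q r) (Imp (Or p q) r)))
| A9 p : ipc_axiom (Imp Bot p).

Inductive ck_axiom : form -> Prop :=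
| KBox p q : ck_axiom (Imp (Box (Imp p q)) (Imp (Box p) (Box q)))
| KDia p q : ck_axiom (Imp (Box (Imp p q)) (Imp (Dia p) (Dia q))).

Inductive N_axiom : form -> Prop :=
| NDB : N_axiom (Imp (Dia Bot) (Box Bot)).

Inductive C_axiom : form -> Prop :=
| CD p q : C_axiom (Imp (Dia (Or p q)) (Or (Dia p) (Dia q))).

Inductive I_axiom : form -> Prop :=
| IDB p q : I_axiom (Imp (Imp (Dia p) (Box q)) (Box (Imp p q))).

(** Extra axioms of CK + N + Ax, where Ax ⊆ {C, I} is encoded by two
    booleans: [hasC] (C_Dia ∈ Ax) and [hasI] (I_{Dia Box} ∈ Ax). *)
Definition extra_axioms (hasC hasI : bool) (f : form) : Prop :=
  N_axiom f \/ (hasC = true /\ C_axiom f) \/ (hasI = true /\ I_axiom f).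

Inductive prv (Ax : form -> Prop) : (form -> Prop) -> form -> Prop :=
| PrvIPC Γ f : ipc_axiom f -> prv Ax Γ f
| PrvCK Γ f : ck_axiom f -> prv Ax Γ f
| PrvAx Γ f : Ax f -> prv Ax Γ f
| PrvEl (Γ : form -> Prop) f : Γ f -> prv Ax Γ f
| PrvMP Γ f g : prv Ax Γ f -> prv Ax Γ (Imp f g) -> prv Ax Γ g
| PrvNec Γ f : prv Ax (fun _ => False) f -> prv Ax Γ (Box f).

Record frame : Type := {
  W : Type;
  e : W;
  le : W -> W -> Prop;
  R : W -> W -> Prop;
  le_refl : forall x, le x x;
  le_trans : forall x y z, le x y -> le y z -> le x z;
  e_max : forall x, le e x -> x = e;
  eR : forall x, R e x <-> x = e
}.

Arguments e {_}.
Arguments le {_} _ _.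
Arguments R {_} _ _.

Definition valuation (F : frame) (V : nat -> W F -> Prop) : Prop :=
  forall p, (forall x y, le x y -> V p x -> V p y) /\ V p e.

Fixpoint forces (F : frame) (V : nat -> W F -> Prop) (x : W F) (f : form)
  : Prop :=
  match f with
  | Var p => V p x
  | Bot => x = e
  | And a b => forces F V x a /\ forces F V x b
  | Or a b => forces F V x a \/ forces F V x b
  | Imp a b => forall y, le x y -> forces F V y a -> forces F V y b
  | Box a => forall y z, le x y -> R y z -> forces F V z a
  | Dia a => forall y, le x y -> exists z, R y z /\ forces F V z a
  end.

Definition sem_conseq (C : frame -> Prop) (Γ : form -> Prop) (f : form)
  : Prop :=
  forall F V x, C F -> valuation F V ->
    (forall g, Γ g -> forces F V x g) -> forces F V x f.

Definition sound_strongly_complete (Ax : form -> Prop) (C : frame -> Prop)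
  : Prop :=
  forall (Γ : form -> Prop) (f : form), prv Ax Γ f <-> sem_conseq C Γ f.

Definition N_suff (F : frame) : Prop :=
  forall x y : W F, R x e -> R x y -> y = e.

Definition N_corr (F : frame) : Prop :=
  forall x : W F, (forall y, le x y -> R y e) ->
    forall y z, le x y -> R y z -> z = e.

Definition C_suff (F : frame) : Prop :=
  forall x : W F, exists x', le x x' /\
    forall y z, le x y -> R x' z -> exists w, R y w /\ le z w.

Definition I_suff (F : frame) : Prop :=
  forall x y z : W F, R x y -> le y z ->
    exists u, le x u /\ R u z /\
      forall s, le u s -> exists t, R s t /\ le z t.

From Stdlib Require Import List Classical FunctionalExtensionality PropExtensionality ProofIrrelevance Cantor Lia.
Import ListNotations.

(* Completeness is by a canonical model. Its worlds are pairs (T, A) of a prime theory T and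
   a set A of formulas required to fail at every successor, subject to T not containing
   Dia of any nonempty finite disjunction of A; the inconsistent theory is the world e.
   Varying A over a fixed T gives the intermediate world needed in the truth lemma for Dia
   and lets the frame conditions be witnessed: for C_suff one excludes everything
   impossible at x, and for I_suff one extends x by the diamonds of z while avoiding the
   boxes of non-members of z. Prime theories come from a Lindenbaum construction along an
   enumeration of formulas. *)

(** * Derivations *)

Definition Top : form := Imp Bot Bot.

Fixpoint imps (l : list form) (b : form) : form :=
  match l with [] => b | a :: l => Imp a (imps l b) end.

Fixpoint disj (l : list form) : form :=
  match l with [] => Bot | a :: l => Or a (disj l) end.

Definition extend (G : form -> Prop) (a : form) : form -> Prop := fun f => G f \/ f = a.
Definition no_hyps : form -> Prop := fun _ => False.

Section Derivations.
Variable Ax : form -> Prop.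
Implicit Types (G : form -> Prop) (a b c f : form).

Lemma prv_weaken G f : prv Ax G f -> forall G', (forall g, G g -> G' g) -> prv Ax G' f.
Proof.
  induction 1; intros G' HG.
  - now apply PrvIPC.
  - now apply PrvCK.
  - now apply PrvAx.
  - now apply PrvEl, HG.
  - eapply PrvMP; eauto.
  - now apply PrvNec.
Qed.

Lemma prv_theorem G f : prv Ax no_hyps f -> prv Ax G f.
Proof. intros H; eapply prv_weaken; [exact H | intros g []]. Qed.

Lemma prv_mp G a b : prv Ax G (Imp a b) -> prv Ax G a -> prv Ax G b.
Proof. intros; eapply PrvMP; eauto. Qed.

Lemma prv_hyp G a : prv Ax (extend G a) a.
Proof. now apply PrvEl; right. Qed.

Lemma prv_extend G a f : prv Ax G f -> prv Ax (extend G a) f.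
Proof. intros H; eapply prv_weaken; [exact H | now left]. Qed.

Lemma prv_const G a b : prv Ax G b -> prv Ax G (Imp a b).
Proof. apply prv_mp, PrvIPC, A1. Qed.

Lemma prv_id G a : prv Ax G (Imp a a).
Proof.
  eapply prv_mp; [eapply prv_mp; [apply PrvIPC, (A2 a (Imp a a) a) | apply PrvIPC, A1]|].
  apply PrvIPC, A1.
Qed.

Lemma prv_imp_intro G a b : prv Ax (extend G a) b -> prv Ax G (Imp a b).
Proof.
  intros H; remember (extend G a) as G'; induction H; subst.
  - now apply prv_const, PrvIPC.
  - now apply prv_const, PrvCK.
  - now apply prv_const, PrvAx.
  - destruct H as [H | ->]; [now apply prv_const, PrvEl | apply prv_id].
  - eapply prv_mp; [eapply prv_mp; [apply PrvIPC, A2 | apply IHprv2] | apply IHprv1]; auto.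
  - now apply prv_const, PrvNec.
Qed.

Lemma prv_imp_elim G a b : prv Ax G (Imp a b) -> prv Ax (extend G a) b.
Proof. intros H; eapply prv_mp; [apply prv_extend, H | apply prv_hyp]. Qed.

Lemma prv_imp_trans G a b c : prv Ax G (Imp a b) -> prv Ax G (Imp b c) -> prv Ax G (Imp a c).
Proof.
  intros Hab Hbc; apply prv_imp_intro.
  eapply prv_mp; [apply prv_extend, Hbc | apply prv_imp_elim, Hab].
Qed.

Lemma prv_and_intro G a b : prv Ax G a -> prv Ax G b -> prv Ax G (And a b).
Proof. intros; eapply prv_mp; [eapply prv_mp; [apply PrvIPC, A5 |] |]; eauto. Qed.

Lemma prv_and_elim_l G a b : prv Ax G (And a b) -> prv Ax G a.
Proof. apply prv_mp, PrvIPC, A3. Qed.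

Lemma prv_and_elim_r G a b : prv Ax G (And a b) -> prv Ax G b.
Proof. apply prv_mp, PrvIPC, A4. Qed.

Lemma prv_or_intro_l G a b : prv Ax G a -> prv Ax G (Or a b).
Proof. apply prv_mp, PrvIPC, A6. Qed.

Lemma prv_or_intro_r G a b : prv Ax G b -> prv Ax G (Or a b).
Proof. apply prv_mp, PrvIPC, A7. Qed.

Lemma prv_or_elim G a b c :
  prv Ax G (Or a b) -> prv Ax G (Imp a c) -> prv Ax G (Imp b c) -> prv Ax G c.
Proof.
  intros Hab Hac Hbc.
  eapply prv_mp; [eapply prv_mp; [eapply prv_mp; [apply PrvIPC, (A8 a b c) |] |] |]; eauto.
Qed.

Lemma prv_bot_elim G a : prv Ax G Bot -> prv Ax G a.
Proof. apply prv_mp, PrvIPC, A9. Qed.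

Lemma prv_box_K G a b : prv Ax G (Box (Imp a b)) -> prv Ax G (Box a) -> prv Ax G (Box b).
Proof. intros; eapply prv_mp; [eapply prv_mp; [apply PrvCK, KBox |] |]; eauto. Qed.

Lemma prv_dia_K G a b : prv Ax G (Box (Imp a b)) -> prv Ax G (Dia a) -> prv Ax G (Dia b).
Proof. intros; eapply prv_mp; [eapply prv_mp; [apply PrvCK, KDia |] |]; eauto. Qed.

Lemma prv_imps_intro l : forall G b, prv Ax (fun f => G f \/ In f l) b -> prv Ax G (imps l b).
Proof.
  induction l as [|a l IH]; intros G b H; simpl.
  - eapply prv_weaken; [exact H | now intros g [Hg | []]].
  - apply prv_imp_intro, IH. eapply prv_weaken; [exact H |].
    intros g [Hg | [Hg | Hg]]; unfold extend; auto.
Qed.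

Lemma prv_imps_elim l : forall G b, prv Ax G (imps l b) -> prv Ax (fun f => G f \/ In f l) b.
Proof.
  induction l as [|a l IH]; intros G b H; simpl in *.
  - eapply prv_weaken; [exact H | auto].
  - apply prv_imp_elim, IH in H. eapply prv_weaken; [exact H |].
    intros g [[Hg | Hg] | Hg]; auto.
Qed.

Lemma prv_disj_app_l G l1 l2 : prv Ax G (Imp (disj l1) (disj (l1 ++ l2))).
Proof.
  induction l1 as [|a l1 IH]; simpl; apply prv_imp_intro.
  - apply prv_bot_elim, prv_hyp.
  - eapply prv_or_elim; [apply prv_hyp | apply prv_imp_intro, prv_or_intro_l, prv_hyp |].
    apply prv_imp_intro, prv_or_intro_r, prv_imp_elim, prv_extend, IH.
Qed.

Lemma prv_disj_app_r G l1 l2 : prv Ax G (Imp (disj l2) (disj (l1 ++ l2))).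
Proof.
  induction l1 as [|a l1 IH]; simpl; [apply prv_id |].
  apply prv_imp_intro, prv_or_intro_r, prv_imp_elim, IH.
Qed.

Lemma prv_disj_const G l b : (forall a, In a l -> a = b) -> prv Ax G (Imp (disj l) b).
Proof.
  induction l as [|a l IH]; intros Hl; simpl; apply prv_imp_intro.
  - apply prv_bot_elim, prv_hyp.
  - eapply prv_or_elim; [apply prv_hyp | rewrite (Hl a (or_introl eq_refl)); apply prv_id |].
    apply prv_extend, IH; auto with datatypes.
Qed.

End Derivations.

(** * Prime theories *)

Arguments to_nat : simpl never.

Fixpoint encode (f : form) : nat :=
  match f with
  | Var n => to_nat (0, n)
  | Bot => to_nat (1, 0)
  | And a b => to_nat (2, to_nat (encode a, encode b))
  | Or a b => to_nat (3, to_nat (encode a, encode b))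
  | Imp a b => to_nat (4, to_nat (encode a, encode b))
  | Box a => to_nat (5, encode a)
  | Dia a => to_nat (6, encode a)
  end.

Lemma to_nat_inj p q : to_nat p = to_nat q -> p = q.
Proof. intros H; now rewrite <- (cancel_of_to p), <- (cancel_of_to q), H. Qed.

Lemma encode_inj f g : encode f = encode g -> f = g.
Proof.
  revert g; induction f; intros g H; destruct g; simpl in H; apply to_nat_inj in H;
    inversion H; subst; auto;
    try (match goal with E : to_nat _ = to_nat _ |- _ => apply to_nat_inj in E; inversion E end);
    f_equal; auto.
Qed.

Section Lindenbaum.
Variable Ax : form -> Prop.

Definition theory (T : form -> Prop) := forall f, prv Ax T f -> T f.
Definition prime (T : form -> Prop) := forall a b, T (Or a b) -> T a \/ T b.

Definition avoids (S P : form -> Prop) :=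
  forall l, (forall a, In a l -> P a) -> ~ prv Ax S (disj l).

Fixpoint lind_chain (S P : form -> Prop) (n : nat) : form -> Prop :=
  match n with
  | 0 => S
  | Datatypes.S n => fun f =>
      lind_chain S P n f \/ (encode f = n /\ avoids (extend (lind_chain S P n) f) P)
  end.

Definition lind_limit S P : form -> Prop := fun f => exists n, lind_chain S P n f.

Lemma lind_chain_mono S P m n f : m <= n -> lind_chain S P m f -> lind_chain S P n f.
Proof. induction 1; simpl; auto. Qed.

Lemma lind_chain_avoids S P n : avoids S P -> avoids (lind_chain S P n) P.
Proof.
  intros HSP; induction n as [|n IH]; simpl; auto.
  intros l Hl Hprv.
  destruct (classic (exists g, encode g = n /\ avoids (extend (lind_chain S P n) g) P))
    as [[g [Hg Hav]] | Hnone].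
  - apply (Hav l Hl); eapply prv_weaken; [exact Hprv |].
    intros f [Hf | [Hf _]]; unfold extend; auto.
    right; apply encode_inj; congruence.
  - apply (IH l Hl); eapply prv_weaken; [exact Hprv |].
    intros f [Hf | Hf]; auto.
    exfalso; apply Hnone; eauto.
Qed.

Lemma lind_limit_compact S P f : prv Ax (lind_limit S P) f -> exists n, prv Ax (lind_chain S P n) f.
Proof.
  intros H; remember (lind_limit S P) as G; induction H; subst.
  - exists 0; now apply PrvIPC.
  - exists 0; now apply PrvCK.
  - exists 0; now apply PrvAx.
  - destruct H as [n Hn]; exists n; now apply PrvEl.
  - destruct IHprv1 as [n1 H1], IHprv2 as [n2 H2]; auto.
    exists (max n1 n2); eapply prv_mp.
    + eapply prv_weaken; [exact H2 | intros; eapply lind_chain_mono; [| eauto]; lia].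
    + eapply prv_weaken; [exact H1 | intros; eapply lind_chain_mono; [| eauto]; lia].
  - exists 0; now apply PrvNec.
Qed.

Lemma lind_limit_avoids S P : avoids S P -> avoids (lind_limit S P) P.
Proof.
  intros HSP l Hl Hprv.
  destruct (lind_limit_compact S P _ Hprv) as [n Hn].
  exact (lind_chain_avoids S P n HSP l Hl Hn).
Qed.

(* A formula left out of the limit was rejected at its own stage. *)
Lemma lind_limit_rejects S P f : ~ lind_limit S P f ->
  exists l, (forall a, In a l -> P a) /\ prv Ax (lind_limit S P) (Imp f (disj l)).
Proof.
  intros Hf.
  destruct (classic (avoids (extend (lind_chain S P (encode f)) f) P)) as [Hav | Hav].
  - exfalso; apply Hf; exists (Datatypes.S (encode f)); simpl; auto.
  - apply not_all_ex_not in Hav as [l Hl]; apply imply_to_and in Hl as [HlP Hprv].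
    apply NNPP in Hprv; exists l; split; auto.
    eapply prv_weaken; [apply prv_imp_intro, Hprv | intros g Hg; now exists (encode f)].
Qed.

Lemma lindenbaum S P : avoids S P ->
  exists T, (forall f, S f -> T f) /\ theory T /\ prime T /\ avoids T P.
Proof.
  intros HSP; pose proof (lind_limit_avoids S P HSP) as Hav.
  exists (lind_limit S P); split; [| split; [| split]]; auto.
  - intros f Hf; now exists 0.
  - intros f Hf; apply NNPP; intros Hn.
    destruct (lind_limit_rejects S P f Hn) as [l [Hl Himp]].
    apply (Hav l Hl); eapply prv_mp; eauto.
  - intros a b Hab; apply NNPP; intros Hn; apply not_or_and in Hn as [Ha Hb].
    destruct (lind_limit_rejects S P a Ha) as [l1 [Hl1 H1]].
    destruct (lind_limit_rejects S P b Hb) as [l2 [Hl2 H2]].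
    apply (Hav (l1 ++ l2)).
    + intros x Hx; apply in_app_or in Hx as [Hx | Hx]; auto.
    + eapply prv_or_elim; [apply PrvEl; exact Hab | |].
      * eapply prv_imp_trans; [exact H1 | apply prv_disj_app_l].
      * eapply prv_imp_trans; [exact H2 | apply prv_disj_app_r].
Qed.

Lemma avoids_not_mem T P a : avoids T P -> P a -> ~ T a.
Proof.
  intros Hav Pa Ta; apply (Hav [a]); [now intros x [<- | []] |].
  now apply prv_or_intro_l, PrvEl.
Qed.

Lemma avoids_bot T P : avoids T P -> ~ T Bot.
Proof. intros Hav Tb; apply (Hav []); [intros _ [] | now apply PrvEl]. Qed.

End Lindenbaum.

(** * Soundness *)

Section Soundness.
Variables (F : frame) (V : nat -> W F -> Prop).
Hypothesis HV : valuation F V.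

Lemma forces_mono f x y : le x y -> forces F V x f -> forces F V y f.
Proof.
  revert x y; induction f; intros x y Hxy Hx; simpl in *.
  - exact (proj1 (HV n) x y Hxy Hx).
  - subst; now apply e_max.
  - destruct Hx; split; eauto.
  - destruct Hx; [left | right]; eauto.
  - intros z Hyz; apply Hx; eapply le_trans; eauto.
  - intros z w Hyz; apply Hx; eapply le_trans; eauto.
  - intros z Hyz; apply Hx; eapply le_trans; eauto.
Qed.

Lemma forces_e f : forces F V e f.
Proof.
  induction f; simpl; auto.
  - apply HV.
  - intros y Hy; apply e_max in Hy; subst; auto.
  - intros y z Hy Hz; apply e_max in Hy; subst; apply eR in Hz; subst; auto.
  - intros y Hy; apply e_max in Hy; subst; exists e; split; auto; now apply eR.
Qed.

Lemma ipc_axiom_valid x f : ipc_axiom f -> forces F V x f.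
Proof.
  destruct 1; simpl.
  - intros y _ Hy z Hz _; eapply forces_mono; eauto.
  - intros y _ Hy z Hz Hz' w Hw Hw'.
    exact (Hy w (le_trans _ _ _ _ Hz Hw) Hw' w (le_refl _ _) (Hz' w Hw Hw')).
  - now intros y _ [H _].
  - now intros y _ [_ H].
  - intros y _ Hy z Hz Hz'; split; auto; eapply forces_mono; eauto.
  - now intros y _ Hy; left.
  - now intros y _ Hy; right.
  - intros y _ Hy z Hz Hz' w Hw [Hw' | Hw'].
    + apply Hy; auto; eapply le_trans; eauto.
    + now apply Hz'.
  - intros y _ ->; apply forces_e.
Qed.

Lemma ck_axiom_valid x f : ck_axiom f -> forces F V x f.
Proof.
  destruct 1; simpl.
  - intros y _ Hy z Hz Hz' u v Hu Huv.
    apply (Hy u v (le_trans _ _ _ _ Hz Hu) Huv v (le_refl _ _)); eapply Hz'; eauto.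
  - intros y _ Hy z Hz Hz' u Hu; destruct (Hz' u Hu) as [v [Huv Hv]].
    exists v; split; auto.
    exact (Hy u v (le_trans _ _ _ _ Hz Hu) Huv v (le_refl _ _) Hv).
Qed.

Lemma N_axiom_valid_corr x : N_corr F -> forces F V x (Imp (Dia Bot) (Box Bot)).
Proof.
  intros HN y _ Hy z w Hz Hw; simpl.
  apply (HN y) with z; auto.
  intros u Hu; destruct (Hy u Hu) as [v [Huv ->]]; auto.
Qed.

Lemma N_axiom_valid_suff x : N_suff F -> forces F V x (Imp (Dia Bot) (Box Bot)).
Proof.
  intros HN y _ Hy z w Hz Hw; simpl.
  destruct (Hy z Hz) as [v [Hzv ->]]; eauto.
Qed.

Lemma C_axiom_valid x p q : C_suff F -> forces F V x (Imp (Dia (Or p q)) (Or (Dia p) (Dia q))).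
Proof.
  intros HC y _ Hy; simpl.
  destruct (HC y) as [y' [Hyy' Hmove]].
  destruct (Hy y' Hyy') as [z [Hz Hpq]].
  assert (Hlift : forall a, forces F V z a -> forall u, le y u ->
            exists w, R u w /\ forces F V w a).
  { intros a Ha u Hu; destruct (Hmove u z Hu Hz) as [w [Huw Hzw]].
    exists w; split; auto; eapply forces_mono; eauto. }
  destruct Hpq; [left | right]; intros u Hu; now apply Hlift.
Qed.

Lemma I_axiom_valid x p q :
  I_suff F -> forces F V x (Imp (Imp (Dia p) (Box q)) (Box (Imp p q))).
Proof.
  intros HI y _ Hy z w Hz Hw v Hv Hvp; simpl.
  destruct (HI z w v Hw Hv) as [u [Hzu [Huv Hs]]].
  assert (Hdia : forces F V u (Dia p)).
  { intros s Hus; destruct (Hs s Hus) as [t [Hst Hvt]].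
    exists t; split; auto; eapply forces_mono; eauto. }
  exact (Hy u (le_trans _ _ _ _ Hz Hzu) Hdia u v (le_refl _ _) Huv).
Qed.

End Soundness.

Lemma soundness (Ax : form -> Prop) (C : frame -> Prop) :
  (forall F V x f, C F -> valuation F V -> Ax f -> forces F V x f) ->
  forall G f, prv Ax G f -> sem_conseq C G f.
Proof.
  intros HAx G f H; induction H; intros F V x HC HV HG.
  - now apply ipc_axiom_valid.
  - now apply ck_axiom_valid.
  - now apply HAx.
  - now apply HG.
  - apply (IHprv2 F V x HC HV HG x (le_refl _ _)), IHprv1; auto.
  - intros y z _ _; apply IHprv; auto; intros g [].
Qed.

(** * The canonical model *)

Section CanonicalModel.
Variable Ax : form -> Prop.

Definition conj_closed (X : form -> Prop) :=
  X Top /\ forall a b, X a -> X b -> X (And a b).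

Lemma theory_top T : theory Ax T -> T Top.
Proof. intros HT; apply HT, prv_imp_intro, prv_hyp. Qed.

Lemma theory_and T a b : theory Ax T -> T a -> T b -> T (And a b).
Proof. intros HT Ha Hb; apply HT, prv_and_intro; now apply PrvEl. Qed.

Lemma theory_mp T a b : theory Ax T -> T (Imp a b) -> T a -> T b.
Proof. intros HT Hab Ha; apply HT; eapply prv_mp; apply PrvEl; eauto. Qed.

Lemma theory_imps_mp T ts c : theory Ax T -> (forall t, In t ts -> T t) -> T (imps ts c) -> T c.
Proof.
  intros HT; induction ts as [|a ts IH]; intros Hts H; simpl in *; auto.
  apply IH; [intros; apply Hts; auto |]; eapply theory_mp; eauto.
Qed.

Lemma theory_dia_bot T a : theory Ax T -> T (Dia Bot) -> T (Dia a).
Proof.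
  intros HT H; apply HT, (prv_dia_K _ _ Bot); [| now apply PrvEl].
  apply PrvNec, prv_imp_intro, prv_bot_elim, prv_hyp.
Qed.

Lemma theory_box_closed G psi : theory Ax G -> prv Ax (fun f => G (Box f)) psi -> G (Box psi).
Proof.
  intros HT H; remember (fun f => G (Box f)) as S; induction H; subst.
  - now apply HT, PrvNec, PrvIPC.
  - now apply HT, PrvNec, PrvCK.
  - now apply HT, PrvNec, PrvAx.
  - assumption.
  - apply HT; eapply prv_box_K; apply PrvEl; auto.
  - now apply HT, PrvNec, PrvNec.
Qed.

Lemma prv_conj_closed_split G X psi : conj_closed X ->
  prv Ax (fun f => X f \/ G (Box f)) psi ->
  exists t, X t /\ prv Ax (fun f => G (Box f)) (Imp t psi).
Proof.
  intros [HTop HAnd] H; remember (fun f => X f \/ G (Box f)) as S; induction H; subst.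
  - exists Top; split; auto; now apply prv_const, PrvIPC.
  - exists Top; split; auto; now apply prv_const, PrvCK.
  - exists Top; split; auto; now apply prv_const, PrvAx.
  - destruct H as [H | H].
    + exists f; split; auto; apply prv_id.
    + exists Top; split; auto; now apply prv_const, PrvEl.
  - destruct IHprv1 as [t1 [X1 H1]], IHprv2 as [t2 [X2 H2]]; auto.
    exists (And t1 t2); split; auto; apply prv_imp_intro.
    eapply prv_mp.
    + eapply prv_mp; [apply prv_extend, H2 | eapply prv_and_elim_r, prv_hyp].
    + eapply prv_mp; [apply prv_extend, H1 | eapply prv_and_elim_l, prv_hyp].
  - exists Top; split; auto; now apply prv_const, PrvNec.
Qed.

Lemma theory_dia_closed G X psi : theory Ax G -> conj_closed X ->
  (forall t, X t -> G (Dia t)) -> prv Ax (fun f => X f \/ G (Box f)) psi -> G (Dia psi).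
Proof.
  intros HG HX HD H; destruct (prv_conj_closed_split G X psi HX H) as [t [Xt Ht]].
  apply theory_box_closed in Ht; auto.
  apply HG; eapply prv_dia_K; apply PrvEl; eauto.
Qed.

Definition dia_excludes (T A : form -> Prop) :=
  forall l, l <> [] -> (forall a, In a l -> A a) -> ~ T (Dia (disj l)).

Lemma dia_excludes_none T : dia_excludes T (fun _ => False).
Proof. intros [|a l] Hl HA; [congruence | destruct (HA a (or_introl eq_refl))]. Qed.

Lemma dia_excludes_single T a : theory Ax T -> ~ T (Dia a) -> dia_excludes T (eq a).
Proof.
  intros HT Ha l _ Hl Hd; apply Ha, HT, (prv_dia_K _ _ (disj l)); [| now apply PrvEl].
  apply PrvNec, prv_disj_const; intros b Hb; symmetry; auto.
Qed.

Record cworld := CWorld {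
  th : form -> Prop;
  excl : form -> Prop;
  th_theory : theory Ax th;
  th_prime : prime th;
  th_excl : dia_excludes th excl
}.

Definition cle (w w' : cworld) := forall f, th w f -> th w' f.

(* By the last clause [e] succeeds only worlds containing [Dia Bot]; given [N_Dia_Box],
   such worlds have no other successor. *)
Definition cR (w w' : cworld) :=
  (forall f, th w (Box f) -> th w' f) /\ (forall a, excl w a -> ~ th w' a) /\
  (th w' Bot -> th w (Dia Bot)).

Lemma theory_full : theory Ax (fun _ => True).
Proof. now intros f _. Qed.

Definition full_world : cworld :=
  CWorld (fun _ => True) (fun _ => False) theory_full (fun a b _ => or_introl I)
    (dia_excludes_none _).

Definition prime_world T (HT : theory Ax T) (HP : prime T) : cworld :=
  CWorld T (fun _ => False) HT HP (dia_excludes_none T).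

Definition excl_world (w : cworld) A (H : dia_excludes (th w) A) : cworld :=
  CWorld (th w) A (th_theory w) (th_prime w) H.

Lemma dia_bot_excl_none (w : cworld) a : th w (Dia Bot) -> ~ excl w a.
Proof.
  intros H Ha; apply (th_excl w [a]); [congruence | now intros x [<- | []] |].
  apply theory_dia_bot; [apply th_theory | exact H].
Qed.

Lemma th_bot_full (w : cworld) : th w Bot -> w = full_world.
Proof.
  intros Hb.
  assert (Hall : forall f, th w f) by (intros f; apply th_theory, prv_bot_elim, PrvEl, Hb).
  assert (Hdb : th w (Dia Bot)) by apply Hall.
  destruct w as [T A HT HP HA]; unfold full_world; simpl in *.
  assert (ET : T = fun _ => True)
    by (extensionality f; apply propositional_extensionality; split; auto).
  assert (EA : A = fun _ => False).
  { extensionality f; apply propositional_extensionality; split; [| intros []].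
    exact (dia_bot_excl_none (CWorld T A HT HP HA) f Hdb). }
  subst; f_equal; apply proof_irrelevance.
Qed.

Lemma full_world_cR (w : cworld) : cR full_world w <-> w = full_world.
Proof.
  split.
  - intros [Hbox _]; now apply th_bot_full, Hbox.
  - intros ->; repeat split; auto.
Qed.

Definition canon : frame := {|
  W := cworld; e := full_world; le := cle; R := cR;
  le_refl := fun w f H => H;
  le_trans := fun x y z Hxy Hyz f H => Hyz f (Hxy f H);
  e_max := fun w H => th_bot_full w (H Bot I);
  eR := full_world_cR |}.

Definition canon_val (p : nat) (w : cworld) : Prop := th w (Var p).

Lemma canon_val_valuation : valuation canon canon_val.
Proof. intros p; split; [intros x y Hxy H; apply Hxy, H | exact I]. Qed.

Lemma lindenbaum_world S P : avoids Ax S P ->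
  exists t : cworld, (forall f, S f -> th t f) /\ (forall a, P a -> ~ th t a) /\ ~ th t Bot.
Proof.
  intros HSP; destruct (lindenbaum Ax S P HSP) as [T [HST [HT [HP Hav]]]].
  exists (prime_world T HT HP); simpl; repeat split; auto.
  - intros a; now apply (avoids_not_mem Ax T P).
  - now apply (avoids_bot Ax T P).
Qed.

Lemma cR_exists (w : cworld) X : conj_closed X -> (forall t, X t -> th w (Dia t)) ->
  exists t, cR w t /\ forall f, X f -> th t f.
Proof.
  intros HX HD; destruct (classic (th w (Dia Bot))) as [Hdb | Hdb].
  - exists full_world; repeat split; auto.
    intros a Ha _; exact (dia_bot_excl_none w a Hdb Ha).
  - destruct (lindenbaum_world (fun f => X f \/ th w (Box f)) (excl w))
      as [t [Hwt [Hexcl Hbot]]].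
    + intros l Hl Hprv.
      apply (theory_dia_closed (th w) X) in Hprv; auto; [| apply th_theory].
      destruct l as [|a l]; [exact (Hdb Hprv) |].
      exact (th_excl w (a :: l) ltac:(congruence) Hl Hprv).
    + exists t; repeat split; auto; tauto.
Qed.

Lemma imp_witness (w : cworld) a b : ~ th w (Imp a b) ->
  exists t, cle w t /\ th t a /\ ~ th t b.
Proof.
  intros Hn; destruct (lindenbaum_world (extend (th w) a) (eq b)) as [t [Hwt [Hb _]]].
  - intros l Hl Hprv; apply Hn, th_theory, prv_imp_intro.
    eapply prv_mp; [| exact Hprv]; apply prv_disj_const; intros; symmetry; auto.
  - exists t; repeat split.
    + intros f Hf; apply Hwt; now left.
    + apply Hwt; now right.
    + now apply Hb.
Qed.

Lemma box_witness (w : cworld) a : ~ th w (Box a) ->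
  exists y t, cle w y /\ cR y t /\ ~ th t a.
Proof.
  intros Hn; destruct (lindenbaum_world (fun f => th w (Box f)) (eq a)) as [t [Hwt [Ha Hbot]]].
  - intros l Hl Hprv; apply Hn, theory_box_closed; [apply th_theory |].
    eapply prv_mp; [| exact Hprv]; apply prv_disj_const; intros; symmetry; auto.
  - exists (excl_world w _ (dia_excludes_none _)), t; split; [now intros f Hf |].
    split; [repeat split; [exact Hwt | intros _ [] | now intros Hb] | now apply Ha].
Qed.

Lemma dia_witness (w : cworld) a : ~ th w (Dia a) ->
  exists y, cle w y /\ forall t, cR y t -> ~ th t a.
Proof.
  intros Hn; exists (excl_world w (eq a) (dia_excludes_single _ a (th_theory w) Hn)).
  split; [now intros f Hf |].
  intros t [_ [Hexcl _]]; exact (Hexcl a eq_refl).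
Qed.

Lemma dia_successor (w : cworld) a : th w (Dia a) -> exists t, cR w t /\ th t a.
Proof.
  intros H; destruct (cR_exists w (fun t => prv Ax no_hyps (Imp a t))) as [t [Hwt Ht]].
  - split; [apply prv_const, prv_id |].
    intros p q Hp Hq; apply prv_imp_intro, prv_and_intro; now apply prv_imp_elim.
  - intros t Ht; apply th_theory, (prv_dia_K _ _ a); [now apply PrvNec | now apply PrvEl].
  - exists t; split; auto; apply Ht, prv_id.
Qed.

Lemma truth f (w : cworld) : forces canon canon_val w f <-> th w f.
Proof.
  revert w; induction f as [n| |a IHa b IHb|a IHa b IHb|a IHa b IHb|a IHa|a IHa]; intros w; simpl.
  - reflexivity.
  - split; [intros ->; exact I | apply th_bot_full].
  - rewrite IHa, IHb; split.
    + intros [Ha Hb]; apply theory_and; auto; apply th_theory.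
    + intros H; split; apply th_theory; [eapply prv_and_elim_l | eapply prv_and_elim_r];
        apply PrvEl, H.
  - rewrite IHa, IHb; split; [| apply th_prime].
    intros [H | H]; apply th_theory; [apply prv_or_intro_l | apply prv_or_intro_r];
      apply PrvEl, H.
  - split.
    + intros H; apply NNPP; intros Hn.
      destruct (imp_witness w a b Hn) as [t [Hwt [Ha Hb]]].
      now apply Hb, IHb, H, IHa.
    + intros H y Hwy Ha; apply IHb; apply IHa in Ha.
      eapply theory_mp; [apply th_theory | apply Hwy, H | exact Ha].
  - split.
    + intros H; apply NNPP; intros Hn.
      destruct (box_witness w a Hn) as [y [t [Hwy [Hyt Ha]]]].
      now apply Ha, IHa, (H y t).
    + intros H y t Hwy [Hbox _]; apply IHa, Hbox, Hwy, H.
  - split.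
    + intros H; apply NNPP; intros Hn; destruct (dia_witness w a Hn) as [y [Hwy Hy]].
      destruct (H y Hwy) as [t [Hyt Ht]]; apply (Hy t Hyt), IHa, Ht.
    + intros H y Hwy; destruct (dia_successor y a (Hwy _ H)) as [t [Hyt Ht]].
      exists t; split; auto; now apply IHa.
Qed.

Lemma completeness (C : frame -> Prop) : C canon -> forall G f, sem_conseq C G f -> prv Ax G f.
Proof.
  intros HC G f H; apply NNPP; intros Hn.
  destruct (lindenbaum_world G (eq f)) as [w [HGw [Hf _]]].
  - intros l Hl Hprv; apply Hn; eapply prv_mp; [| exact Hprv].
    apply prv_disj_const; intros; symmetry; auto.
  - apply (Hf f eq_refl), truth, H; auto; [apply canon_val_valuation |].
    intros g Hg; now apply truth, HGw.
Qed.


(** * Frame conditions of the canonical frame *)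

Lemma canon_succ_of_dia_bot (x : cworld) : Ax (Imp (Dia Bot) (Box Bot)) ->
  th x (Dia Bot) -> forall y, cR x y -> y = full_world.
Proof.
  intros hN Hdb y [Hbox _]; apply th_bot_full, Hbox.
  eapply theory_mp; [apply th_theory | apply th_theory, PrvAx, hN | exact Hdb].
Qed.

Lemma canon_N_corr : Ax (Imp (Dia Bot) (Box Bot)) -> N_corr canon.
Proof.
  intros hN x Hx; simpl in *.
  assert (Hdb : th x (Dia Bot)).
  { apply NNPP; intros Hn; destruct (dia_witness x Bot Hn) as [y [Hxy Hy]].
    exact (Hy full_world (Hx y Hxy) I). }
  intros y z Hxy; exact (canon_succ_of_dia_bot y hN (Hxy _ Hdb) z).
Qed.

Lemma canon_N_suff : Ax (Imp (Dia Bot) (Box Bot)) -> N_suff canon.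
Proof.
  intros hN x y [_ [_ Hdb]]; exact (canon_succ_of_dia_bot x hN (Hdb I) y).
Qed.

Lemma theory_dia_disj_bot T l : (forall p q, Ax (Imp (Dia (Or p q)) (Or (Dia p) (Dia q)))) ->
  theory Ax T -> prime T -> (forall a, In a l -> ~ T (Dia a)) -> T (Dia (disj l)) -> T (Dia Bot).
Proof.
  intros hC HT HP; induction l as [|a l IH]; intros Hl Hd; simpl in *; auto.
  assert (Hor : T (Or (Dia a) (Dia (disj l)))) by (eapply theory_mp; [| apply HT, PrvAx, hC |]; eauto).
  destruct (HP _ _ Hor) as [Ha | Hd'].
  - destruct (Hl a (or_introl eq_refl) Ha).
  - apply IH; auto.
Qed.

(* The witness [x'] is [x] itself, excluding from its successors everything that is
   not possible at [x]; [C_Dia] makes this exclusion consistent. *)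
Lemma canon_C_suff : (forall p q, Ax (Imp (Dia (Or p q)) (Or (Dia p) (Dia q)))) -> C_suff canon.
Proof.
  intros hC x; simpl in *.
  assert (Hexcl : dia_excludes (th x) (fun a => ~ th x (Dia a))).
  { intros [|a l] Hl Ha Hd; [congruence |].
    apply (Ha a (or_introl eq_refl)), theory_dia_bot; [apply th_theory |].
    exact (theory_dia_disj_bot (th x) (a :: l) hC (th_theory x) (th_prime x) Ha Hd). }
  exists (excl_world x _ Hexcl); split; [now intros f Hf |].
  intros y z Hxy [_ [Hz _]].
  destruct (cR_exists y (th z)) as [t [Hyt Hzt]].
  - split; [apply theory_top | intros; apply theory_and]; auto; apply th_theory.
  - intros t Ht; apply Hxy, NNPP; intros Hn; exact (Hz t Hn Ht).
  - exists t; split; auto.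
Qed.

Lemma prv_dia_hyps_split G (Th : form -> Prop) psi :
  prv Ax (fun f => G f \/ exists t, f = Dia t /\ Th t) psi ->
  exists ts, (forall t, In t ts -> Th t) /\ prv Ax G (imps (map Dia ts) psi).
Proof.
  intros H; remember (fun f => G f \/ exists t, f = Dia t /\ Th t) as S; induction H; subst.
  - exists []; split; [intros _ [] | now apply PrvIPC].
  - exists []; split; [intros _ [] | now apply PrvCK].
  - exists []; split; [intros _ [] | now apply PrvAx].
  - destruct H as [H | [t [-> Ht]]].
    + exists []; split; [intros _ [] | now apply PrvEl].
    + exists [t]; split; [now intros x [<- | []] | apply prv_id].
  - destruct IHprv1 as [l1 [Hl1 H1]], IHprv2 as [l2 [Hl2 H2]]; auto.
    exists (l1 ++ l2); split.
    + intros x Hx; apply in_app_or in Hx as [Hx | Hx]; auto.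
    + apply prv_imps_intro; apply prv_imps_elim in H1, H2; rewrite map_app.
      eapply prv_mp; [eapply prv_weaken; [exact H2 |] | eapply prv_weaken; [exact H1 |]];
        intros h [Hh | Hh]; auto using in_or_app.
  - exists []; split; [intros _ [] | now apply PrvNec].
Qed.

Lemma prv_I_imps : (forall p q, Ax (Imp (Imp (Dia p) (Box q)) (Box (Imp p q)))) ->
  forall ts G c, prv Ax G (imps (map Dia ts) (Box c)) -> prv Ax G (Box (imps ts c)).
Proof.
  intros hI; induction ts as [|a ts IH]; intros G c H; simpl in *; auto.
  eapply prv_mp; [apply PrvAx, hI | apply prv_imp_intro, IH, prv_imp_elim, H].
Qed.

Lemma prv_disj_boxes (T : form -> Prop) l : prime T -> ~ T Bot ->
  (forall a, In a l -> exists c, a = Box c /\ ~ T c) ->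
  exists c, ~ T c /\ prv Ax no_hyps (Imp (disj l) (Box c)).
Proof.
  intros HP Hbot; induction l as [|a l IH]; intros Hl; simpl.
  - exists Bot; split; auto; apply prv_imp_intro, prv_bot_elim, prv_hyp.
  - destruct (Hl a (or_introl eq_refl)) as [c1 [-> Hc1]].
    destruct IH as [c2 [Hc2 H2]]; [intros x Hx; apply Hl; now right |].
    exists (Or c1 c2); split.
    + intros Hc; destruct (HP _ _ Hc); auto.
    + apply prv_imp_intro; eapply prv_or_elim; [apply prv_hyp | |]; apply prv_imp_intro.
      * eapply prv_box_K; [apply PrvNec, prv_imp_intro, prv_or_intro_l, prv_hyp | apply prv_hyp].
      * eapply prv_box_K; [apply PrvNec, prv_imp_intro, prv_or_intro_r, prv_hyp |].
        apply prv_imp_elim, prv_extend, prv_theorem, H2.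
Qed.

(* For consistent [z], the witness [u] extends [x] by all [Dia t] with [t] in [z] while
   avoiding every [Box c] with [c] outside [z]; [I_DiaBox] makes this consistent. *)
Lemma canon_I_suff : (forall p q, Ax (Imp (Imp (Dia p) (Box q)) (Box (Imp p q)))) -> I_suff canon.
Proof.
  intros hI x y z Hxy Hyz; simpl in *.
  destruct (classic (th z Bot)) as [Hzb | Hzb].
  - apply th_bot_full in Hzb; subst z.
    exists full_world; split; [now intros f _ |]; split; [now apply full_world_cR |].
    intros s Hs; rewrite (th_bot_full s (Hs Bot I)).
    exists full_world; split; [now apply full_world_cR | now intros f _].
  - destruct (lindenbaum_world (fun f => th x f \/ exists t, f = Dia t /\ th z t)
                (fun f => exists c, f = Box c /\ ~ th z c)) as [u [Hxu [Hboxu _]]].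
    + intros l Hl Hprv.
      destruct (prv_disj_boxes (th z) l (th_prime z) Hzb Hl) as [c [Hc Hdisj]].
      apply Hc; eapply prv_mp in Hprv; [| apply prv_theorem, Hdisj].
      apply prv_dia_hyps_split in Hprv as [ts [Hts Hprv]].
      apply (prv_I_imps hI), th_theory in Hprv.
      apply (theory_imps_mp (th z) ts); auto; [apply th_theory |].
      apply Hyz, (proj1 Hxy), Hprv.
    + exists (excl_world u _ (dia_excludes_none _)); simpl.
      split; [intros f Hf; apply Hxu; now left |]; split.
      * split; [| split; [intros _ [] | now intros Hb]].
        intros f Hf; apply NNPP; intros Hn; exact (Hboxu (Box f) (ex_intro _ f (conj eq_refl Hn)) Hf).
      * intros s Hus; destruct (cR_exists s (th z)) as [t [Hst Hzt]].
        -- split; [apply theory_top | intros; apply theory_and]; auto; apply th_theory.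
        -- intros t Ht; apply Hus, Hxu; right; eauto.
        -- exists t; split; auto.
Qed.

End CanonicalModel.

Theorem mainTheorem15 (hasC hasI : bool) :
  sound_strongly_complete (extra_axioms hasC hasI)
    (fun F => N_corr F /\ (hasC = true -> C_suff F) /\ (hasI = true -> I_suff F))
  /\
  (hasI = true ->
   sound_strongly_complete (extra_axioms hasC hasI)
     (fun F => N_suff F /\ (hasC = true -> C_suff F) /\ I_suff F)).
Proof.
  set (Ax := extra_axioms hasC hasI).
  assert (hN : Ax (Imp (Dia Bot) (Box Bot))) by (left; constructor).
  assert (hC : hasC = true -> forall p q, Ax (Imp (Dia (Or p q)) (Or (Dia p) (Dia q))))
    by (intros E p q; right; left; split; [exact E | constructor]).
  assert (hI : hasI = true -> forall p q, Ax (Imp (Imp (Dia p) (Box q)) (Box (Imp p q))))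
    by (intros E p q; right; right; split; [exact E | constructor]).
  split; [| intros EI]; intros G f; split.
  - apply soundness; intros F V x g [HN [HC HI]] HV [[] | [[E []] | [E []]]].
    + now apply N_axiom_valid_corr.
    + now apply C_axiom_valid, HC.
    + now apply I_axiom_valid, HI.
  - apply completeness; repeat split.
    + now apply canon_N_corr.
    + intros E; now apply canon_C_suff, hC.
    + intros E; now apply canon_I_suff, hI.
  - apply soundness; intros F V x g [HN [HC HI]] HV [[] | [[E []] | [E []]]].
    + now apply N_axiom_valid_suff.
    + now apply C_axiom_valid, HC.
    + now apply I_axiom_valid.
  - apply completeness; repeat split.
    + now apply canon_N_suff.
    + intros E; now apply canon_C_suff, hC.
    + now apply canon_I_suff, hI.
Qed.
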